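(* Let $n=d_z$ and $d=d_x$. Suppose that for every $\theta\in\Theta$: (1) $f_\theta$ is differentiable and its Jacobian $J_{f_\theta}(x)\in\mathbb{R}^{n\times d}$ has full rank (rank $\min(n,d)$) for all $x$; (2) there exist $n+1$ points $y^0,\dots,y^n\in\mathcal{Y}$ such that the $n\times n$ matrix $R_\theta=\big(g_\theta(y^1)-g_\theta(y^0),\dots,g_\theta(y^n)-g_\theta(y^0)\big)$ is invertible. Then for any $\theta,\theta'\in\Theta$, if $p_\theta(x\mid y)=p_{\theta'}(x\mid y)$ for all $x\in\mathcal{X},y\in\mathcal{Y}$, there exist a matrix $A\in\mathbb{R}^{n\times n}$ of rank at least $\min(n,d_x)$ and a vector $c\in\mathbb{R}^n$ such that $f_\theta(x)=Af_{\theta'}(x)+c$ for all $x\in\mathcal{X}$. Symmetrically, if for every $\theta\in\Theta$, $g_\theta$ is differentiable with full-rank Jacobian everywhere and there exist $n+1$ points $x^0,\dots,x^n\in\mathcal{X}$ such that $Q_\theta=\big(f_\theta(x^1)-f_\theta(x^0),\dots,f_\theta(x^n)-f_\theta(x^0)\big)$ is invertible, then $p_\theta(\cdot\mid\cdot)=p_{\theta'}(\cdot\mid\cdot)$ implies that there exist $B\in\mathbb{R}^{n\times n}$ of rank at least $\min(n,d_y)$ and $e\in\mathbb{R}^n$ with $g_\theta(y)=Bg_{\theta'}(y)+e$ for all $y\in\mathcal{Y}$. Finally, if all four conditions above hold for every $\theta\in\Theta$, then the matrices $A$ and $B$ are invertible (rank $n$).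
   Context: Let $\mathcal{X}\subset\mathbb{R}^{d_x}$ and $\mathcal{Y}\subset\mathbb{R}^{d_y}$. A parameter set $\Theta$ indexes pairs of feature extractors $f_\theta:\mathcal{X}\to\mathbb{R}^{d_z}$ and $g_\theta:\mathcal{Y}\to\mathbb{R}^{d_z}$ such that for every $y\in\mathcal{Y}$ the normalizing constant $Z(y;\theta)=\int_{\mathcal{X}}\exp(-f_\theta(x)^\top g_\theta(y))\,dx$ is finite. The conditional energy-based model is $p_\theta(x\mid y)=\exp(-f_\theta(x)^\top g_\theta(y))/Z(y;\theta)$. *)

From HB Require Import structures.
From Stdlib Require Import Reals Lra ClassicalEpsilon FunctionalExtensionality.
From mathcomp Require Import all_boot all_order all_algebra.

Set Implicit Arguments.
Unset Strict Implicit.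
Unset Printing Implicit Defensive.

Definition Req_bool (x y : R) : bool := if Req_EM_T x y then true else false.

Lemma Req_boolP : Equality.axiom Req_bool.
Proof. by move=> x y; rewrite /Req_bool; case: Req_EM_T => h; constructor. Qed.

HB.instance Definition _ := hasDecEq.Build R Req_boolP.

Definition Rfind (P : pred R) (n : nat) : option R :=
  match excluded_middle_informative (exists x, P x) with
  | left ex => Some (proj1_sig (constructive_indefinite_description _ ex))
  | right _ => None
  end.

Lemma Rfind_correct (P : pred R) n x : Rfind P n = Some x -> P x.
Proof.
rewrite /Rfind; case: excluded_middle_informative => // ex [<-].
exact: proj2_sig (constructive_indefinite_description _ ex).
Qed.

Lemma Rfind_complete (P : pred R) : (exists x, P x) -> exists n, Rfind P n.
Proof.
by move=> ex; exists 0%N; rewrite /Rfind; case: excluded_middle_informative.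
Qed.

Lemma Rfind_ext (P Q : pred R) : P =1 Q -> Rfind P =1 Rfind Q.
Proof.
by move=> PQ; have -> : P = Q by apply: functional_extensionality.
Qed.

HB.instance Definition _ := hasChoice.Build R Rfind_correct Rfind_complete Rfind_ext.

Lemma R_addA : associative Rplus. Proof. by move=> *; rewrite Rplus_assoc. Qed.
Lemma R_addC : commutative Rplus. Proof. by move=> *; rewrite Rplus_comm. Qed.
Lemma R_add0 : left_id R0 Rplus. Proof. by move=> *; rewrite Rplus_0_l. Qed.
Lemma R_addN : left_inverse R0 Ropp Rplus. Proof. by move=> *; rewrite Rplus_opp_l. Qed.

HB.instance Definition _ := GRing.isZmodule.Build R R_addA R_addC R_add0 R_addN.

Lemma R_mulA : associative Rmult. Proof. by move=> *; rewrite Rmult_assoc. Qed.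
Lemma R_mulC : commutative Rmult. Proof. by move=> *; rewrite Rmult_comm. Qed.
Lemma R_mul1 : left_id R1 Rmult. Proof. by move=> *; rewrite Rmult_1_l. Qed.
Lemma R_mulDl : left_distributive Rmult Rplus.
Proof. by move=> *; rewrite Rmult_plus_distr_r. Qed.
Lemma R_one_neq0 : R1 != R0.
Proof. by apply/eqP; exact: R1_neq_R0. Qed.

HB.instance Definition _ :=
  GRing.Zmodule_isComNzRing.Build R R_mulA R_mulC R_mul1 R_mulDl R_one_neq0.

Definition Rinv0 (x : R) : R := if Req_bool x R0 then R0 else Rinv x.

Lemma R_mulVf (x : R) : x != R0 -> Rmult (Rinv0 x) x = R1.
Proof.
move=> /eqP nx; rewrite /Rinv0; case: Req_boolP => // _.
exact: Rinv_l.
Qed.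

Lemma R_inv0 : Rinv0 R0 = R0.
Proof. by rewrite /Rinv0; case: Req_boolP. Qed.

HB.instance Definition _ := GRing.ComNzRing_isField.Build R R_mulVf R_inv0.

Local Open Scope ring_scope.

(* l^1 norm on R^k (all norms on R^k are equivalent, so the choice is
   immaterial for openness and differentiability). *)
Definition vnorm (k : nat) (v : 'cV[R]_k) : R :=
  (\sum_(i < k) Rabs (v i ord0))%R.

Definition is_open (k : nat) (S : 'cV[R]_k -> Prop) : Prop :=
  forall x, S x -> exists delta : R, Rlt R0 delta /\
    forall z, Rlt (vnorm (z - x)%R) delta -> S z.

Definition is_jacobian (k m : nat) (F : 'cV[R]_k -> 'cV[R]_m)
    (x : 'cV[R]_k) (J : 'M[R]_(m, k)) : Prop :=
  forall eps : R, Rlt R0 eps -> exists delta : R, Rlt R0 delta /\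
    forall h : 'cV[R]_k, Rlt (vnorm h) delta ->
      Rle (vnorm (F (x + h) - F x - J *m h)%R) (Rmult eps (vnorm h)).

Definition diff_full_rank (k m : nat) (S : 'cV[R]_k -> Prop)
    (F : 'cV[R]_k -> 'cV[R]_m) : Prop :=
  forall x, S x -> exists J : 'M[R]_(m, k),
    is_jacobian F x J /\ \rank J = minn m k.

Definition diff_matrix (k n : nat) (G : 'cV[R]_k -> 'cV[R]_n)
    (pts : 'I_n.+1 -> 'cV[R]_k) : 'M[R]_n :=
  \matrix_(i < n, j < n) ((G (pts (lift ord0 j)) i ord0)
                           - (G (pts ord0)) i ord0)%R.

Definition has_invertible_diffs (k n : nat) (S : 'cV[R]_k -> Prop)
    (G : 'cV[R]_k -> 'cV[R]_n) : Prop :=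
  exists pts : 'I_n.+1 -> 'cV[R]_k,
    (forall i, S (pts i)) /\ diff_matrix G pts \in unitmx.

Definition inner (n : nat) (u v : 'cV[R]_n) : R := ((u^T *m v) ord0 ord0).

Definition ebm (dx dy n : nat) (f : 'cV[R]_dx -> 'cV[R]_n)
    (g : 'cV[R]_dy -> 'cV[R]_n) (Z : 'cV[R]_dy -> R)
    (x : 'cV[R]_dx) (y : 'cV[R]_dy) : R :=
  Rdiv (exp (Ropp (inner (f x) (g y)))) (Z y).

(* Taking logarithms in p_theta = p_theta' gives
     f_th(x)^T g_th(y) = f_th'(x)^T g_th'(y) + ln Z_th'(y) - ln Z_th(y).
   Evaluating at the points y^0, ..., y^n and subtracting the equation at y^0
   removes the y-only terms: f_th(x)^T R_th = f_th'(x)^T R_th' + r, and since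
   R_th is invertible, f_th = A f_th' + c with A = (R_th^-1)^T R_th'^T.
   Differentiating this affine relation on the open set X gives
   J_f_th = A J_f_th', so rank A >= rank J_f_th = min(n, d_x).  The same
   argument with the roles of x and y exchanged identifies g.  Finally, the
   relation f_th = A f_th' + c gives Q_th = A Q_th', so A is invertible when
   Q_th is, and likewise for B. *)

From HB Require Import structures.
From Stdlib Require Import Reals Lra Classical.
From mathcomp Require Import all_boot all_order all_algebra ring.
Import GRing.Theory.
Set Implicit Arguments.
Unset Strict Implicit.
Local Open Scope ring_scope.

(* [lra] and [nra] only recognise [R0]/[R1] in their [IZR] form. *)
Ltac Lra := change R0 with (IZR Z0) in *; change R1 with (IZR 1) in *; lra.
Ltac Nra := change R0 with (IZR Z0) in *; change R1 with (IZR 1) in *; nra.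

Lemma addRE (a b : R) : a + b = Rplus a b. Proof. by []. Qed.
Lemma mulRE (a b : R) : a * b = Rmult a b. Proof. by []. Qed.

Lemma Rle_sum k (F G : 'I_k -> R) : (forall i, Rle (F i) (G i)) ->
  Rle (\sum_(i < k) F i) (\sum_(i < k) G i).
Proof.
move=> FG; apply: (big_rec2 (fun a b => Rle a b)) => [|i a b _ ab].
  exact: Rle_refl.
by rewrite !addRE; have := FG i; lra.
Qed.

Lemma Rsum_ge0 (I : Type) (r : seq I) (P : pred I) (F : I -> R) :
  (forall i, Rle R0 (F i)) -> Rle R0 (\sum_(i <- r | P i) F i).
Proof.
move=> F_ge0; apply: (big_rec (fun a => Rle R0 a)) => [|i a _ a_ge0].
  exact: Rle_refl.
by rewrite addRE; have := F_ge0 i; lra.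
Qed.

Lemma Rabs_sum_le k (F : 'I_k -> R) :
  Rle (Rabs (\sum_(i < k) F i)) (\sum_(i < k) Rabs (F i)).
Proof.
apply: (big_rec2 (fun a b => Rle (Rabs a) b)) => [|i a b _ ab].
  by rewrite Rabs_R0; exact: Rle_refl.
by rewrite !addRE; have := Rabs_triang (F i) a; lra.
Qed.

Section VectorNorm.

Variable k : nat.
Implicit Types u v : 'cV[R]_k.

Lemma vnorm_coord_le v i : Rle (Rabs (v i ord0)) (vnorm v).
Proof.
rewrite /vnorm (bigD1 i) //= addRE -{1}(Rplus_0_r (Rabs _)).
by apply/Rplus_le_compat_l/Rsum_ge0 => j; exact: Rabs_pos.
Qed.

Lemma vnorm_ge0 v : Rle R0 (vnorm v).
Proof. by apply: Rsum_ge0 => i; exact: Rabs_pos. Qed.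

Lemma vnormD_le u v : Rle (vnorm (u + v)) (Rplus (vnorm u) (vnorm v)).
Proof.
rewrite /vnorm -addRE -big_split /=; apply: Rle_sum => i.
by rewrite !mxE addRE; exact: Rabs_triang.
Qed.

Lemma vnormZ (a : R) v : vnorm (a *: v) = Rmult (Rabs a) (vnorm v).
Proof.
rewrite /vnorm -mulRE mulr_sumr; apply: eq_bigr => i _.
by rewrite !mxE mulRE Rabs_mult.
Qed.

Lemma vnormN v : vnorm (- v) = vnorm v.
Proof. by apply: eq_bigr => i _; rewrite !mxE Rabs_Ropp. Qed.

Lemma vnorm_delta (l : 'I_k) : vnorm (delta_mx l ord0 : 'cV[R]_k) = R1.
Proof.
rewrite /vnorm (bigD1 l) //= big1 => [|j /negbTE jl]; last first.
  by rewrite mxE jl /= Rabs_R0.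
by rewrite mxE !eqxx /= Rabs_R1 addr0.
Qed.

Lemma vnorm_small_eq0 v : (forall eps, Rlt R0 eps -> Rle (vnorm v) eps) -> v = 0.
Proof.
move=> small; apply/matrixP => i j; have -> : j = ord0 by apply: val_inj; case: j => [[]].
rewrite mxE; apply: NNPP => vi_neq0.
have vi_pos := Rabs_pos_lt _ vi_neq0.
have := vnorm_coord_le v i; have := small _ (Rdiv_lt_0_compat _ _ vi_pos Rlt_0_2); Lra.
Qed.

End VectorNorm.

Definition mnorm m k (A : 'M[R]_(m, k)) : R :=
  \sum_(i < m) \sum_(j < k) Rabs (A i j).

Lemma mnorm_ge0 m k (A : 'M[R]_(m, k)) : Rle R0 (mnorm A).
Proof. by apply: Rsum_ge0 => i; apply: Rsum_ge0 => j; exact: Rabs_pos. Qed.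

Lemma vnorm_mulmx_le m k (A : 'M[R]_(m, k)) (v : 'cV[R]_k) :
  Rle (vnorm (A *m v)) (Rmult (mnorm A) (vnorm v)).
Proof.
rewrite /vnorm /mnorm -mulRE mulr_suml; apply: Rle_sum => i.
rewrite mxE mulr_suml; apply: Rle_trans (Rabs_sum_le _) _.
apply: Rle_sum => j; rewrite mulRE Rabs_mult.
exact: Rmult_le_compat_l (Rabs_pos _) (vnorm_coord_le v j).
Qed.

Section Jacobian.

Variables k m : nat.
Implicit Types (F H : 'cV[R]_k -> 'cV[R]_m) (x : 'cV[R]_k) (J : 'M[R]_(m, k)).

Lemma is_jacobian_unique F x J1 J2 :
  is_jacobian F x J1 -> is_jacobian F x J2 -> J1 = J2.
Proof.
move=> J1F J2F; apply/eqP; rewrite -subr_eq0; apply/eqP.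
suff col0 l : (J1 - J2) *m delta_mx l (ord0 : 'I_1) = 0.
  apply/matrixP => i l; have := congr1 (fun N : 'cV[R]_m => N i ord0) (col0 l).
  by rewrite -colE !mxE.
apply: vnorm_small_eq0 => eps eps_gt0.
have [d1 [d1_gt0 J1d]] := J1F _ (Rdiv_lt_0_compat _ _ eps_gt0 Rlt_0_2).
have [d2 [d2_gt0 J2d]] := J2F _ (Rdiv_lt_0_compat _ _ eps_gt0 Rlt_0_2).
set t := Rdiv (Rmin d1 d2) (IZR 2).
have := Rmin_l d1 d2; have := Rmin_r d1 d2; have := Rmin_glb_lt _ _ _ d1_gt0 d2_gt0.
move=> dmin_gt0 dmin_le2 dmin_le1.
have [t_gt0 [t_lt_d1 t_lt_d2]] : Rlt R0 t /\ Rlt t d1 /\ Rlt t d2.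
  by rewrite /t; Lra.
set e := delta_mx l ord0 : 'cV[R]_k; set h := t *: e.
have normh : vnorm h = t by rewrite vnormZ vnorm_delta Rabs_pos_eq; Lra.
have diff_eq : (J1 - J2) *m h =
    (F (x + h) - F x - J2 *m h) - (F (x + h) - F x - J1 *m h).
  rewrite mulmxBl; move: (J1 *m h) (J2 *m h) (F (x + h)) (F x) => a b u v.
  by apply/matrixP => i j; rewrite !mxE; ring.
have : Rle (vnorm ((J1 - J2) *m h)) (Rmult eps t).
  rewrite diff_eq; apply: Rle_trans (vnormD_le _ _) _; rewrite vnormN.
  have := J1d h; have := J2d h; rewrite normh => /(_ t_lt_d2) ? /(_ t_lt_d1) ?.
  Lra.
rewrite /h -scalemxAr vnormZ Rabs_pos_eq; last Lra.
by move=> ?; apply: (Rmult_le_reg_l t) => //; rewrite [Rmult t eps]Rmult_comm.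
Qed.

Lemma is_jacobian_local (S : 'cV[R]_k -> Prop) F H x J :
  is_open S -> S x -> (forall z, S z -> F z = H z) ->
  is_jacobian H x J -> is_jacobian F x J.
Proof.
move=> S_open Sx FH HJ eps eps_gt0.
have [d [d_gt0 Hd]] := HJ eps eps_gt0; have [r [r_gt0 Sr]] := S_open x Sx.
exists (Rmin d r); split => [|h hh]; first exact: Rmin_glb_lt.
have := Rmin_l d r; have := Rmin_r d r => hr hd.
rewrite !FH //; first by apply: Hd; lra.
by apply: Sr; rewrite addrC addKr; lra.
Qed.

Lemma is_jacobian_affine p H x J (A : 'M[R]_(p, m)) (c : 'cV[R]_p) :
  is_jacobian H x J -> is_jacobian (fun z => A *m H z + c) x (A *m J).
Proof.
move=> HJ eps eps_gt0.
have M_ge0 := mnorm_ge0 A.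
set e := Rdiv eps (Rplus (mnorm A) R1).
have e_gt0 : Rlt R0 e by apply: Rdiv_lt_0_compat => //; Lra.
have Me_le : Rle (Rmult (mnorm A) e) eps.
  have : Rmult e (Rplus (mnorm A) R1) = eps by rewrite /e /Rdiv Rmult_assoc Rinv_l ?Rmult_1_r //; Lra.
  Nra.
have [d [d_gt0 Hd]] := HJ e e_gt0.
exists d; split => // h hh.
have -> : A *m H (x + h) + c - (A *m H x + c) - A *m J *m h =
    A *m (H (x + h) - H x - J *m h).
  rewrite -mulmxA !mulmxBr; move: (A *m H (x + h)) (A *m H x) (A *m (J *m h)).
  by move=> a b u; apply/matrixP => i j; rewrite !mxE; ring.
apply: Rle_trans (vnorm_mulmx_le _ _) _.
have := Hd h hh; have := vnorm_ge0 h; have := vnorm_ge0 (H (x + h) - H x - J *m h).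
Nra.
Qed.

End Jacobian.

Lemma jacobian_affine_link k m p (S : 'cV[R]_k -> Prop)
    (F : 'cV[R]_k -> 'cV[R]_m) (G : 'cV[R]_k -> 'cV[R]_p) A c x J J' :
  is_open S -> S x -> (forall z, S z -> F z = A *m G z + c) ->
  is_jacobian F x J -> is_jacobian G x J' -> J = A *m J'.
Proof.
move=> S_open Sx FG FJ GJ; apply: (is_jacobian_unique FJ).
apply: (is_jacobian_local (H := fun z => A *m G z + c) S_open Sx FG).
exact: is_jacobian_affine.
Qed.

Lemma full_rank_affine_link k n (S : 'cV[R]_k -> Prop) (F F' : 'cV[R]_k -> 'cV[R]_n) :
  is_open S -> diff_full_rank S F -> diff_full_rank S F' ->
  (exists A c, forall x, S x -> F x = A *m F' x + c) ->
  exists A c, (minn n k <= \rank A)%N /\ forall x, S x -> F x = A *m F' x + c.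
Proof.
move=> S_open Ffull F'full [A [c FA]].
have [[x Sx] | S_empty] := classic (exists x, S x); last first.
  exists 1%:M, 0; split => [|x Sx]; first by rewrite mxrank1 geq_minl.
  by case: S_empty; exists x.
exists A, c; split => //.
have [J [FJ <-]] := Ffull x Sx; have [J' [F'J _]] := F'full x Sx.
by rewrite (jacobian_affine_link S_open Sx FA FJ F'J) mxrankM_maxl.
Qed.

Lemma innerC n (u v : 'cV[R]_n) : inner u v = inner v u.
Proof. by rewrite /inner !mxE; apply: eq_bigr => i _; rewrite !mxE mulrC. Qed.

Lemma trmx_mul_diff_matrix k n (w : 'cV[R]_n) (G : 'cV[R]_k -> 'cV[R]_n) pts j :
  (w^T *m diff_matrix G pts) ord0 j =
  inner w (G (pts (lift ord0 j))) - inner w (G (pts ord0)).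
Proof.
by rewrite /inner !mxE -sumrB; apply: eq_bigr => i _; rewrite !mxE mulrBr.
Qed.

Lemma diff_matrix_affine k n (S : 'cV[R]_k -> Prop) (F G : 'cV[R]_k -> 'cV[R]_n) A c pts :
  (forall z, S z -> F z = A *m G z + c) -> (forall i, S (pts i)) ->
  diff_matrix F pts = A *m diff_matrix G pts.
Proof.
move=> FG Spts; apply/matrixP => i j; rewrite !mxE !FG // !mxE opprD addrACA subrr addr0 -sumrB.
by apply: eq_bigr => q _; rewrite !mxE mulrBr.
Qed.

Lemma affine_link_unitmx k n (S : 'cV[R]_k -> Prop) (F G : 'cV[R]_k -> 'cV[R]_n) A c :
  (forall z, S z -> F z = A *m G z + c) -> has_invertible_diffs S F -> A \in unitmx.
Proof.
move=> FG [pts [Spts Funit]].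
by move: Funit; rewrite (diff_matrix_affine FG Spts) unitmx_mul => /andP[].
Qed.

Lemma affine_of_inner_eq dA dB n (SA : 'cV[R]_dA -> Prop) (SB : 'cV[R]_dB -> Prop)
    (F F' : 'cV[R]_dA -> 'cV[R]_n) (G G' : 'cV[R]_dB -> 'cV[R]_n)
    (a : 'cV[R]_dA -> R) (b : 'cV[R]_dB -> R) :
  has_invertible_diffs SB G ->
  (forall u v, SA u -> SB v ->
     inner (F u) (G v) = inner (F' u) (G' v) + (a u + b v)) ->
  exists A c, forall u, SA u -> F u = A *m F' u + c.
Proof.
case=> pts [SBpts Gunit] FG.
set M := diff_matrix G pts; set M' := diff_matrix G' pts.
set r : 'rV[R]_n := \row_j (b (pts (lift ord0 j)) - b (pts ord0)).
have FM u : SA u -> (F u)^T *m M = (F' u)^T *m M' + r.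
  move=> SAu; apply/matrixP => i j; rewrite (ord1 i) [RHS]mxE.
  by rewrite !trmx_mul_diff_matrix mxE !FG //; ring.
exists ((invmx M)^T *m M'^T), ((invmx M)^T *m r^T) => u SAu.
have -> : F u = (((F' u)^T *m M' + r) *m invmx M)^T.
  by rewrite -FM // mulmxK // trmxK.
by rewrite trmx_mul raddfD /= trmx_mul trmxK mulmxDr mulmxA.
Qed.

Lemma ebm_eq_inner dx dy n (f f' : 'cV[R]_dx -> 'cV[R]_n) (g g' : 'cV[R]_dy -> 'cV[R]_n)
    (Z Z' : 'cV[R]_dy -> R) x y :
  Rlt R0 (Z y) -> Rlt R0 (Z' y) ->
  ebm f g Z x y = ebm f' g' Z' x y ->
  inner (f x) (g y) = inner (f' x) (g' y) + (ln (Z' y) - ln (Z y)).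
Proof.
rewrite /ebm /Rdiv => Z_gt0 Z'_gt0 /(congr1 ln).
rewrite !ln_mult ?ln_Rinv ?ln_exp //; try exact: exp_pos; try exact: Rinv_0_lt_compat.
by move=> eq; rewrite -[RHS]/(Rplus _ (Rplus _ (Ropp _))); lra.
Qed.

Theorem theorem1 (dx dy n : nat)
    (X : 'cV[R]_dx -> Prop) (Y : 'cV[R]_dy -> Prop) (Theta : Type)
    (f : Theta -> 'cV[R]_dx -> 'cV[R]_n) (g : Theta -> 'cV[R]_dy -> 'cV[R]_n)
    (Z : Theta -> 'cV[R]_dy -> R)
    (hX : is_open X) (hY : is_open Y)
    (hZ : forall th y, Y y -> Rlt R0 (Z th y)) :
  ((forall th, diff_full_rank X (f th)) ->
   (forall th, has_invertible_diffs Y (g th)) ->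
   forall th th',
     (forall x y, X x -> Y y ->
        ebm (f th) (g th) (Z th) x y = ebm (f th') (g th') (Z th') x y) ->
     exists (A : 'M[R]_n) (c : 'cV[R]_n),
       (minn n dx <= \rank A)%N /\
       forall x, X x -> f th x = A *m f th' x + c)
  /\
  ((forall th, diff_full_rank Y (g th)) ->
   (forall th, has_invertible_diffs X (f th)) ->
   forall th th',
     (forall x y, X x -> Y y ->
        ebm (f th) (g th) (Z th) x y = ebm (f th') (g th') (Z th') x y) ->
     exists (B : 'M[R]_n) (e : 'cV[R]_n),
       (minn n dy <= \rank B)%N /\
       forall y, Y y -> g th y = B *m g th' y + e)
  /\
  ((forall th, diff_full_rank X (f th)) ->
   (forall th, has_invertible_diffs Y (g th)) ->
   (forall th, diff_full_rank Y (g th)) ->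
   (forall th, has_invertible_diffs X (f th)) ->
   forall th th',
     (forall x y, X x -> Y y ->
        ebm (f th) (g th) (Z th) x y = ebm (f th') (g th') (Z th') x y) ->
     exists (A : 'M[R]_n) (c : 'cV[R]_n) (B : 'M[R]_n) (e : 'cV[R]_n),
       \rank A = n /\ \rank B = n /\
       (forall x, X x -> f th x = A *m f th' x + c) /\
       (forall y, Y y -> g th y = B *m g th' y + e)).
Proof.
pose same th th' := forall x y, X x -> Y y ->
  ebm (f th) (g th) (Z th) x y = ebm (f th') (g th') (Z th') x y.
have f_affine th th' : same th th' -> has_invertible_diffs Y (g th) ->
    exists A c, forall x, X x -> f th x = A *m f th' x + c.
  move=> eq_p g_diffs; apply: (affine_of_inner_eq (a := fun=> 0) g_diffs).
  by move=> x y Xx Yy; rewrite add0r; apply: ebm_eq_inner; auto.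
have g_affine th th' : same th th' -> has_invertible_diffs X (f th) ->
    exists B e, forall y, Y y -> g th y = B *m g th' y + e.
  move=> eq_p f_diffs; apply: (affine_of_inner_eq (b := fun=> 0) f_diffs).
  move=> y x Yy Xx; rewrite addr0 innerC [inner (g th' y) _]innerC.
  by apply: ebm_eq_inner; auto.
split; [|split].
- move=> f_full g_diffs th th' eq_p.
  exact: full_rank_affine_link (f_affine _ _ eq_p (g_diffs th)).
- move=> g_full f_diffs th th' eq_p.
  exact: full_rank_affine_link (g_affine _ _ eq_p (f_diffs th)).
- move=> _ g_diffs _ f_diffs th th' eq_p.
  have [A [c fA]] := f_affine _ _ eq_p (g_diffs th).
  have [B [e gB]] := g_affine _ _ eq_p (f_diffs th).
  exists A, c, B, e; split; [|split] => //; apply: mxrank_unit.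
    exact: affine_link_unitmx fA (f_diffs th).
  exact: affine_link_unitmx gB (g_diffs th).
Qed.
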